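(* Let $(X,\mathcal{A})$ be a $(v,k,\lambda)$-BIBD. Then $(X,\mathcal{A})$ has a perfect nesting if and only if $(X,\mathcal{A})$ is a Banff design having an exact colouring.
   Context: A $(v,k,\lambda)$-BIBD is a pair $(X,\mathcal{A})$ where $X$ is a set of $v$ points and $\mathcal{A}$ is a multiset of $k$-subsets of $X$ (blocks) such that every pair of distinct points lies in exactly $\lambda$ blocks. A perfect nesting of $(X,\mathcal{A})$ is a map $\phi:\mathcal{A}\to X$ with $\phi(A)\notin A$ for all $A$ such that $(X,\{A\cup\{\phi(A)\}:A\in\mathcal{A}\})$ is a $(v,k+1,\lambda+1)$-BIBD. The Levi graph $\mathcal{L}(X,\mathcal{A})$ is the bipartite graph with vertex set $X\cup\mathcal{A}$ (each block a separate vertex) and an edge $\{x,A\}$ whenever $x\in A$. A harmonious colouring of a graph is a map $c$ from vertices to colours such that adjacent vertices receive different colours and no two distinct edges receive the same unordered pair of colours; the harmonious chromatic number $h$ is the minimum number of colours in a harmonious colouring. $(X,\mathcal{A})$ is a Banff design if $h(\mathcal{L}(X,\mathcal{A}))=v$; a Banff design has an exact colouring if there is a harmonious colouring of $\mathcal{L}(X,\mathcal{A})$ with $v$ colours in which every pair of distinct colours occurs on exactly one edge. *)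

From mathcomp Require Import all_boot.
Set Implicit Arguments. Unset Strict Implicit. Unset Printing Implicit Defensive.

(* A design: points are the elements of a finType T (so v = #|T|); blocks are
   indexed by a finType B (so repeated blocks are allowed: a multiset), block
   A being the point set blk A. *)
Definition is_bibd (T B : finType) (blk : B -> {set T}) (v k lam : nat) : Prop :=
  [/\ #|T| = v,
      (forall A : B, #|blk A| = k) &
      (forall x y : T, x != y ->
         #|[set A : B | (x \in blk A) && (y \in blk A)]| = lam)].

Definition perfect_nesting (T B : finType) (blk : B -> {set T}) (v k lam : nat)
  (phi : B -> T) : Prop :=
  (forall A : B, phi A \notin blk A) /\
  is_bibd (fun A => phi A |: blk A) v k.+1 lam.+1.

Definition has_perfect_nesting (T B : finType) (blk : B -> {set T}) (v k lam : nat) :=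
  exists phi : B -> T, perfect_nesting blk v k lam phi.

Definition is_edge (V : finType) (e : rel V) (E : {set V}) : bool :=
  [exists u : V, exists w : V, e u w && (E == [set u; w])].

Definition harmonious (V : finType) (e : rel V) (n : nat) (c : V -> 'I_n) : Prop :=
  (forall u w : V, e u w -> c u != c w) /\
  (forall u1 w1 u2 w2 : V, e u1 w1 -> e u2 w2 ->
     [set c u1; c w1] = [set c u2; c w2] -> [set u1; w1] = [set u2; w2]).

Definition harmonious_with (V : finType) (e : rel V) (n : nat) : Prop :=
  exists c : V -> 'I_n, harmonious e c.

Definition harm_chrom_num_is (V : finType) (e : rel V) (n : nat) : Prop :=
  harmonious_with e n /\ (forall m, m < n -> ~ harmonious_with e m).

(* Levi graph: vertices are points (inl) and blocks (inr), each block a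
   separate vertex; x ~ A iff x \in A. *)
Definition levi_adj (T B : finType) (blk : B -> {set T}) : rel (T + B) :=
  fun a b =>
    match a, b with
    | inl x, inr A => x \in blk A
    | inr A, inl x => x \in blk A
    | _, _ => false
    end.

Definition banff (T B : finType) (blk : B -> {set T}) : Prop :=
  harm_chrom_num_is (levi_adj blk) #|T|.

Definition exact_colouring (T B : finType) (blk : B -> {set T})
  (c : T + B -> 'I_#|T|) : Prop :=
  harmonious (levi_adj blk) c /\
  (forall i j : 'I_#|T|, i != j ->
     #|[set E : {set T + B} | is_edge (levi_adj blk) E &&
                               ([set c u | u in E] == [set i; j])]| = 1).

Definition has_exact_colouring (T B : finType) (blk : B -> {set T}) : Prop :=
  exists c, exact_colouring blk c.

From mathcomp Require Import all_boot.
Set Implicit Arguments. Unset Strict Implicit. Unset Printing Implicit Defensive.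

(* Both a perfect nesting phi and an exact colouring c label the vertices of
   the Levi graph (a point p by p resp. c p, a block A by phi A resp. c A) so
   that the edges (p, A) are mapped bijectively onto the 2-subsets of the
   labels: for phi this says that every pair of points lies in exactly one more
   block after nesting, for c that every pair of colours occurs exactly once.
   Renaming points by colours turns a nesting into an exact colouring, and an
   exact colouring forces h = v: a harmonious colouring with m colours labels
   the C(v, 2) edges by distinct pairs of colours, so C(v, 2) <= C(m, 2).
   Conversely, an exact colouring that is injective on points is renamed back
   into a nesting.  Otherwise two points x0, y0 share a colour; then no block
   holds two points (x0 and y0 cannot share a block, so lambda = 0), some
   colour a0 is missed by the points, and recolouring y0 by a0 makes the point
   colouring a bijection with inverse sigma.  Nesting every block A at
   sigma (c A) then works after a local repair of the blocks of colour a0. *)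

Lemma eq_set2 (U : finType) (a b a' b' : U) :
  [set a; b] = [set a'; b'] -> (a = a' /\ b = b') \/ (a = b' /\ b = a').
Proof.
move=> E.
have : a \in [set a'; b'] by rewrite -E set21.
have : b \in [set a'; b'] by rewrite -E set22.
have : a' \in [set a; b] by rewrite E set21.
have : b' \in [set a; b] by rewrite E set22.
by rewrite !inE; do 4! case/orP=> /eqP ?; subst; auto.
Qed.

Lemma imset_set2 (U V : finType) (f : U -> V) (a b : U) :
  f @: [set a; b] = [set f a; f b].
Proof. by rewrite imsetU1 imset_set1. Qed.

Definition pairs (U : finType) := [set S : {set U} | #|S| == 2].

Lemma card_pairs (U : finType) : #|pairs U| = 'C(#|U|, 2).
Proof. exact: card_draws. Qed.

Lemma ltn_bin2 m n : 1 < n -> m < n -> 'C(m, 2) < 'C(n, 2).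
Proof.
case: n => // n n_gt0 le_mn; rewrite binS bin1 -addn1.
exact: leq_add (leq_bin2l 2 (le_mn : m <= n)) (n_gt0 : 0 < n).
Qed.

Lemma onto_card_inj (T T' : finType) (f : T -> T') :
  #|T'| = #|T| -> (forall y, exists x, f x = y) -> injective f.
Proof.
move=> eq_card onto.
have : {in T &, injective f}.
  apply/image_injP; rewrite -eq_card eqn_leq max_card /=.
  by apply/subset_leq_card/subsetP=> y _; have [x <-] := onto y; exact: codom_f.
by move=> injf x y; apply: injf.
Qed.

Section Levi.
Variables (T B : finType) (blk : B -> {set T}).

Definition flags := [set f : T * B | f.1 \in blk f.2].

Lemma in_flags p A : ((p, A) \in flags) = (p \in blk A).
Proof. by rewrite inE. Qed.

Section Labels.
Variables (U : finType) (g : T + B -> U).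

Definition flag_label (f : T * B) : {set U} := [set g (inl f.1); g (inr f.2)].

Lemma flag_labelE p A : flag_label (p, A) = [set g (inl p); g (inr A)].
Proof. by []. Qed.

Definition levi_proper := forall p A, p \in blk A -> g (inl p) != g (inr A).

Definition pair_bijective :=
  {in flags &, injective flag_label} /\ flag_label @: flags = pairs U.

Definition labelled_flags (S : {set U}) := [set f in flags | flag_label f == S].

Lemma flag_labels_pairs : levi_proper -> flag_label @: flags \subset pairs U.
Proof.
move=> gP; apply/subsetP=> _ /imsetP[[p A] pA ->].
by rewrite inE cards2 gP // -in_flags.
Qed.

Lemma pair_bijective_proper : pair_bijective -> levi_proper.
Proof.
case=> _ labels p A pA.
have : flag_label (p, A) \in pairs U by rewrite -labels imset_f ?in_flags.
by rewrite inE cards2 /=; case: (_ != _).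
Qed.

Lemma pair_bijective_onto u w : pair_bijective -> u != w ->
  exists p A, p \in blk A /\ [set g (inl p); g (inr A)] = [set u; w].
Proof.
case=> _ labels uw.
have : [set u; w] \in flag_label @: flags by rewrite labels inE cards2 uw.
by case/imsetP=> [[p A]]; rewrite in_flags => pA ->; exists p, A.
Qed.

Lemma pair_bijectiveP_card : pair_bijective <->
  [/\ levi_proper, {in flags &, injective flag_label} & #|flags| = 'C(#|U|, 2)].
Proof.
split=> [gB | [gP inj cardF]].
  have [inj labels] := gB; split=> //; first exact: pair_bijective_proper.
  by rewrite -card_pairs -labels card_in_imset.
split=> //; apply/eqP.
by rewrite eqEcard flag_labels_pairs //= card_pairs card_in_imset // cardF.
Qed.

Lemma pair_bijective_of_onto : levi_proper -> #|flags| = 'C(#|U|, 2) ->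
  (forall u w, u != w ->
     exists p A, p \in blk A /\ [set g (inl p); g (inr A)] = [set u; w]) ->
  pair_bijective.
Proof.
move=> gP cardF onto.
have labels : flag_label @: flags = pairs U.
  apply/eqP; rewrite eqEsubset flag_labels_pairs //=.
  apply/subsetP=> S; rewrite inE => /cards2P[u [w [uw ->]]].
  have [p [A [pA <-]]] := onto u w uw.
  by apply/imsetP; exists (p, A); rewrite ?in_flags.
by split=> //; apply/imset_injP; rewrite labels card_pairs cardF.
Qed.

Lemma pair_bijectiveP_fibre : pair_bijective <->
  levi_proper /\ forall u w, u != w -> #|labelled_flags [set u; w]| = 1.
Proof.
split=> [gB | [gP one]].
  split=> [|u w uw]; first exact: pair_bijective_proper.
  have [p [A [pA lab]]] := pair_bijective_onto gB uw.
  apply/eqP/cards1P; exists (p, A); apply/setP=> f; rewrite !inE.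
  apply/andP/eqP=> [[fF /eqP flab] | ->]; last by rewrite pA -lab.
  by apply: gB.1; rewrite ?inE ?flab -?lab.
have inj : {in flags &, injective flag_label}.
  move=> [p A] f pA fF lab; rewrite in_flags in pA.
  have /eqP/cards1P[f0 F0] := one _ _ (gP p A pA).
  have : f \in labelled_flags [set g (inl p); g (inr A)].
    by rewrite inE fF -lab eqxx.
  have : (p, A) \in labelled_flags [set g (inl p); g (inr A)].
    by rewrite inE in_flags pA eqxx.
  by rewrite F0 !inE => /eqP-> /eqP->.
split=> //; apply/eqP; rewrite eqEsubset flag_labels_pairs //=.
apply/subsetP=> S; rewrite inE => /cards2P[u [w [uw ->]]].
have /eqP/cards1P[f0 F0] := one u w uw.
have : f0 \in labelled_flags [set u; w] by rewrite F0 set11.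
by rewrite inE => /andP[f0F /eqP <-]; apply: imset_f.
Qed.

End Labels.

Lemma pair_bijective_comp (U U' : finType) (g : T + B -> U) (h : U -> U') :
  bijective h -> pair_bijective g -> pair_bijective (h \o g).
Proof.
move=> hB /pair_bijectiveP_card[gP inj cardF]; have hI := bij_inj hB.
have labE f : flag_label (h \o g) f = h @: flag_label g f by rewrite imset_set2.
apply/pair_bijectiveP_card; split.
- by move=> p A pA; rewrite /= (inj_eq hI) gP.
- by move=> f f' fF f'F; rewrite !labE => /(imset_inj hI); apply: inj.
- by rewrite cardF (bij_eq_card hB).
Qed.

Lemma eq_pair_bijective (U : finType) (g g' : T + B -> U) :
  g =1 g' -> pair_bijective g -> pair_bijective g'.
Proof.
move=> eq_g [inj labels].
have labE : flag_label g =1 flag_label g' by move=> f; rewrite /flag_label !eq_g.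
by split; [move=> f f' fF f'F; rewrite -!labE; apply: inj | rewrite -(eq_imset _ labE)].
Qed.

Lemma levi_adj_flag u w : levi_adj blk u w ->
  exists p A, p \in blk A /\ [set u; w] = [set inl p; inr A].
Proof.
case: u w => [p|A] [q|A'] //= uw; first by exists p, A'.
by exists q, A; rewrite setUC.
Qed.

Lemma harmoniousP n (c : T + B -> 'I_n) : harmonious (levi_adj blk) c <->
  levi_proper c /\ {in flags &, injective (flag_label c)}.
Proof.
split=> [[cP cI] | [cP cI]].
  split=> [p A pA | [p A] [p' A']]; first exact: (cP (inl p) (inr A)).
  rewrite !in_flags => pA p'A' lab.
  have := cI (inl p) (inr A) (inl p') (inr A') pA p'A' lab.
  by case/eq_set2=> [[[->] [->]] | []].
split=> [[p|A] [q|A'] //= uw | u1 w1 u2 w2]; first exact: cP.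
  by rewrite eq_sym; apply: cP.
move=> /levi_adj_flag[p [A [pA E1]]] /levi_adj_flag[p' [A' [p'A' E2]]].
rewrite -!imset_set2 E1 E2 !imset_set2 => lab.
by have [-> ->] : (p, A) = (p', A') by apply: cI; rewrite ?in_flags.
Qed.

Lemma card_levi_edges_coloured n (c : T + B -> 'I_n) (S : {set 'I_n}) :
  #|[set E : {set T + B} | is_edge (levi_adj blk) E && (c @: E == S)]| =
  #|labelled_flags c S|.
Proof.
pose edge (f : T * B) : {set T + B} := [set inl f.1; inr f.2].
have edge_inj : injective edge.
  by move=> [p A] [p' A'] /eq_set2[[[->] [->]] | []].
rewrite -(card_imset _ edge_inj); apply: eq_card => E; rewrite inE.
apply/andP/imsetP=> [[/existsP[u /existsP[w /andP[uw /eqP ->]]] /eqP cE] | ].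
  have [p [A [pA EA]]] := levi_adj_flag uw.
  by exists (p, A); rewrite // inE in_flags pA -cE EA imset_set2 /=.
case=> [[p A]]; rewrite inE in_flags => /andP[pA /eqP lab] ->; split.
  by apply/existsP; exists (inl p); apply/existsP; exists (inr A); rewrite /= pA eqxx.
by rewrite imset_set2 -lab.
Qed.

Lemma exact_colouringP (c : T + B -> 'I_#|T|) :
  exact_colouring blk c <-> pair_bijective c.
Proof.
split=> [[/harmoniousP[cP _] one] | cB].
  apply/pair_bijectiveP_fibre; split=> // i j ij.
  by rewrite -card_levi_edges_coloured one.
have [cP one] := (pair_bijectiveP_fibre _).1 cB.
split=> [|i j ij]; first by apply/harmoniousP; split=> //; exact: cB.1.
by rewrite card_levi_edges_coloured one.
Qed.

Lemma card_flags_harmonious n (c : T + B -> 'I_n) :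
  harmonious (levi_adj blk) c -> #|flags| <= 'C(n, 2).
Proof.
case/harmoniousP=> cP cI; rewrite -(card_in_imset cI).
by rewrite -[n in 'C(n, 2)]card_ord -card_pairs subset_leq_card ?flag_labels_pairs.
Qed.

Lemma exact_colouring_banff (c : T + B -> 'I_#|T|) :
  exact_colouring blk c -> banff blk.
Proof.
move=> ec; split=> [|m ltmT [c' /card_flags_harmonious]]; first by exists c; case: ec.
have [_ _ ->] := (pair_bijectiveP_card _).1 ((exact_colouringP c).1 ec).
rewrite card_ord; case: (ltnP 1 #|T|) => [T_gt1 | T_le1].
  by rewrite leqNgt ltn_bin2.
have /card_gt0P[x _] : 0 < #|T| by apply: leq_ltn_trans ltmT.
have m0 : m = 0 by apply/eqP; rewrite -leqn0 -ltnS (leq_trans ltmT T_le1).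
by move: (c' (inl x)); rewrite m0 => -[].
Qed.

Section Nesting.
Variable phi : B -> T.

Definition nest_map (z : T + B) : T :=
  match z with inl p => p | inr A => phi A end.

Lemma nest_map_proper : levi_proper nest_map <-> forall A, phi A \notin blk A.
Proof.
split=> [nP A | nin p A pA]; first by apply/negP=> /nP; rewrite eqxx.
by apply/eqP=> /= pE; have := nin A; rewrite -pE pA.
Qed.

Lemma card_nested_pairs u w : (forall A, phi A \notin blk A) -> u != w ->
  #|[set A | (u \in phi A |: blk A) && (w \in phi A |: blk A)]| =
  #|[set A | (u \in blk A) && (w \in blk A)]| +
  #|labelled_flags nest_map [set u; w]|.
Proof.
move=> nin uw; set L := labelled_flags nest_map [set u; w].
have snd_inj : {in L &, injective snd}.
  move=> [p A] [p' A']; rewrite !inE !flag_labelE /=.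
  move=> /andP[pA /eqP E] /andP[_ /eqP E'] eqA.
  subst A'; move: E'; rewrite -E => /eq_set2[[-> //] | [_ phip]].
  by have := nin A; rewrite phip pA.
have memL A : (A \in snd @: L) =
    ((u \in blk A) && (phi A == w)) || ((w \in blk A) && (phi A == u)).
  apply/imsetP/idP=> [[[p A']] | ].
    rewrite !inE flag_labelE /= => /andP[pA /eqP E] ->.
    by case/eq_set2: E => [[<- <-] | [<- <-]]; rewrite pA eqxx ?orbT.
  case/orP=> /andP[xA /eqP phix]; [exists (u, A) | exists (w, A)] => //;
    by rewrite !inE flag_labelE /= xA phix ?eqxx // setUC eqxx.
have nestedE : [set A | (u \in phi A |: blk A) && (w \in phi A |: blk A)] =
    [set A | (u \in blk A) && (w \in blk A)] :|: snd @: L.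
  apply/setP=> A; rewrite !inE memL; have := nin A.
  case: (eqVneq (phi A) u) => [phiu|_]; case: (eqVneq (phi A) w) => [phiw|_] /= nA.
  - by rewrite -phiu phiw eqxx in uw.
  - by rewrite -phiu (negbTE nA); case: (w \in blk A).
  - by rewrite -phiw (negbTE nA); case: (u \in blk A).
  - by rewrite !andbF !orbF.
have disj : [set A | (u \in blk A) && (w \in blk A)] :&: snd @: L = set0.
  apply/setP=> A; rewrite !inE memL.
  case uA: (u \in blk A); case wA: (w \in blk A) => //=.
  by apply: contraNF (nin A) => /orP[] /eqP ->.
by rewrite nestedE cardsU disj cards0 subn0 card_in_imset.
Qed.

Lemma perfect_nestingP v k lam : is_bibd blk v k lam ->
  perfect_nesting blk v k lam phi <-> pair_bijective nest_map.
Proof.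
case=> Tv blk_k blk_lam.
split=> [[nin [_ _ nested_lam]] | /pair_bijectiveP_fibre[/nest_map_proper nin one]].
  apply/pair_bijectiveP_fibre; split=> [|u w uw]; first exact/nest_map_proper.
  apply/eqP; rewrite -(eqn_add2l lam) -{1}(blk_lam u w uw) -card_nested_pairs //.
  by rewrite nested_lam // addn1.
split=> //; split=> // [A | u w uw]; first by rewrite cardsU1 nin blk_k.
by rewrite card_nested_pairs // blk_lam // one // addn1.
Qed.

End Nesting.

End Levi.

Section RepeatedPointColour.
Variables (T B : finType) (blk : B -> {set T}) (lam : nat) (c : T + B -> 'I_#|T|).
Hypothesis blk_lam :
  forall x y, x != y -> #|[set A | (x \in blk A) && (y \in blk A)]| = lam.
Hypothesis cB : pair_bijective blk c.
Variables x0 y0 : T.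
Hypotheses (x0y0 : x0 != y0) (cx0y0 : c (inl x0) = c (inl y0)).

Local Notation pc p := (c (inl p)).
Local Notation bc A := (c (inr A)).

Lemma block_points_eq A p q : p \in blk A -> q \in blk A -> p = q.
Proof.
move=> pA qA; apply/eqP; apply: contraT => pq.
have : lam = 0.
  rewrite -(blk_lam x0y0); apply/eqP; rewrite cards_eq0; apply/eqP/setP=> A'.
  rewrite !inE; apply/negP=> /andP[x0A y0A].
  suff : (x0, A') = (y0, A') by case=> /eqP; rewrite (negbTE x0y0).
  by apply: cB.1; rewrite ?in_flags ?flag_labelE ?cx0y0.
move/eqP; rewrite -(blk_lam pq) cards_eq0 => /eqP/setP/(_ A).
by rewrite !inE pA qA.
Qed.

Lemma unused_point_colour : exists a0, forall p, pc p != a0.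
Proof.
have pc_not_inj : ~ injective (fun p => pc p).
  by move=> /(_ x0 y0 cx0y0) /eqP; rewrite (negbTE x0y0).
case: (boolP [exists a, [forall p, pc p != a]]) => [/existsP[a /forallP] | ].
  by exists a.
rewrite negb_exists => /forallP all_used; case: pc_not_inj.
apply: onto_card_inj => [|a]; first by rewrite card_ord.
by move: (all_used a); rewrite negb_forall => /existsP[p /negPn /eqP]; exists p.
Qed.

Section UnusedColour.
Variable a0 : 'I_#|T|.
Hypothesis a0_unused : forall p, pc p != a0.

Lemma a0_partner d : d != a0 -> exists p A, [/\ p \in blk A, pc p = d & bc A = a0].
Proof.
move=> da0; have [p [A [pA]]] := pair_bijective_onto cB da0.
case/eq_set2=> [[pd Aa0] | [pa0 _]]; first by exists p, A.
by have := a0_unused p; rewrite pa0 eqxx.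
Qed.

Definition recolour p := if p == y0 then a0 else pc p.

Lemma recolour_ne p : p != y0 -> recolour p = pc p.
Proof. by rewrite /recolour => /negbTE ->. Qed.

Lemma recolour_onto d : exists p, recolour p = d.
Proof.
case: (eqVneq d a0) => [->| da0]; first by exists y0; rewrite /recolour eqxx.
have [p [A [_ <- _]]] := a0_partner da0.
case: (eqVneq p y0) => [-> | py0]; last by exists p; rewrite recolour_ne.
by exists x0; rewrite recolour_ne.
Qed.

Lemma recolour_inj : injective recolour.
Proof. by apply: onto_card_inj recolour_onto; rewrite card_ord. Qed.

Section Inverse.
Variable sigma : 'I_#|T| -> T.
Hypotheses (recolourK : cancel recolour sigma) (sigmaK : cancel sigma recolour).

Lemma point_colour_inj p q : p != y0 -> q != y0 -> pc p = pc q -> p = q.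
Proof. by move=> py0 qy0 pq; apply: (can_inj recolourK); rewrite !recolour_ne. Qed.

Lemma same_colour_x0 p : pc p = pc x0 -> p = x0 \/ p = y0.
Proof.
move=> px0; case: (eqVneq p y0) => [| py0]; [by right | left].
exact: point_colour_inj.
Qed.

Lemma sigma_colour p : p != y0 -> sigma (pc p) = p.
Proof. by move=> py0; rewrite -(recolour_ne py0) recolourK. Qed.

Lemma a0_block_at w : w != x0 -> w != y0 -> exists2 A, w \in blk A & bc A = a0.
Proof.
move=> wx0 wy0; have [q [A [qA qw Aa0]]] := a0_partner (a0_unused w).
case: (eqVneq q y0) => [qy0 | qy0]; last first.
  by exists A; rewrite // -(point_colour_inj qy0 wy0 qw).
move: qw; rewrite qy0 -cx0y0 => /esym /same_colour_x0 [] /eqP.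
  by rewrite (negbTE wx0).
by rewrite (negbTE wy0).
Qed.

Definition y0_block_coloured p := [exists A, (y0 \in blk A) && (bc A == pc p)].

Lemma x0_not_y0_block_coloured : ~~ y0_block_coloured x0.
Proof.
apply/existsP=> -[A /andP[y0A /eqP Ax0]].
by have := (pair_bijective_proper cB) _ _ y0A; rewrite Ax0 cx0y0 eqxx.
Qed.

(* Blocks of colour a0 are nested at sigma a0 = y0, except those through y0
   and those through a point p such that some block through y0 has colour c p:
   that block is nested at p and so already yields {p, y0}, while the colour
   pair {c x0, c p} it uses is no longer available to yield {p, x0}. *)
Definition nest A :=
  if bc A == a0 then
    if [exists p in blk A, (p == y0) || y0_block_coloured p] then x0 else y0
  else sigma (bc A).

Lemma nest_coloured A : bc A != a0 -> nest A = sigma (bc A).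
Proof. by rewrite /nest => /negbTE ->. Qed.

Lemma nest_a0 A p : bc A = a0 -> p \in blk A ->
  nest A = if (p == y0) || y0_block_coloured p then x0 else y0.
Proof.
move=> Aa0 pA; rewrite /nest Aa0 eqxx; congr (if _ then _ else _).
apply/existsP/idP=> [[q /andP[qA]] | pY]; first by rewrite (block_points_eq qA pA).
by exists p; rewrite pA.
Qed.

Lemma nest_notin A : nest A \notin blk A.
Proof.
apply/negP=> nA; case: (eqVneq (bc A) a0) => [Aa0 | Aa0].
  move: (nest_a0 Aa0 nA); case: ifP => cond nE; rewrite nE in cond.
    by rewrite (negbTE x0y0) (negbTE x0_not_y0_block_coloured) in cond.
  by rewrite eqxx in cond.
have := (pair_bijective_proper cB) _ _ nA; rewrite nest_coloured //.
case: (eqVneq (sigma (bc A)) y0) => [sy0 | sy0]; last first.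
  by rewrite -recolour_ne // sigmaK eqxx.
by move: (sigmaK (bc A)); rewrite sy0 /recolour eqxx => a0A; rewrite a0A eqxx in Aa0.
Qed.

Lemma nest_onto_oriented u w p A : u != w -> u != y0 -> w != y0 ->
  p \in blk A -> pc p = pc u -> bc A = pc w ->
  exists p A, p \in blk A /\ [set p; nest A] = [set u; w].
Proof.
move=> uw uy0 wy0 pA pu Aw.
have nA : nest A = w by rewrite nest_coloured ?Aw ?a0_unused // sigma_colour.
case: (eqVneq p y0) => [py0 | py0].
  have : pc u = pc x0 by rewrite -pu py0 cx0y0.
  case/same_colour_x0=> ux0; last by rewrite ux0 eqxx in uy0.
  subst u p; have wx0 : w != x0 by rewrite eq_sym.
  have [A' wA' A'a0] := a0_block_at wx0 wy0.
  exists w, A'; split=> //; rewrite (nest_a0 A'a0 wA') (negbTE wy0) /=.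
  have -> : y0_block_coloured w by apply/existsP; exists A; rewrite pA Aw eqxx.
  by rewrite setUC.
by exists p, A; rewrite nA -(point_colour_inj py0 uy0 pu).
Qed.

Lemma nest_onto_y0 w : w != y0 ->
  exists p A, p \in blk A /\ [set p; nest A] = [set y0; w].
Proof.
move=> wy0; case: (eqVneq w x0) => [-> | wx0].
  have [p [A [pA px0 Aa0]]] := a0_partner (a0_unused x0).
  exists p, A; rewrite (nest_a0 Aa0 pA).
  case: (same_colour_x0 px0) pA => -> pA; last by rewrite eqxx.
  by rewrite (negbTE x0y0) (negbTE x0_not_y0_block_coloured) setUC.
case Yw : (y0_block_coloured w).
  have /existsP[A /andP[y0A /eqP Aw]] := Yw.
  by exists y0, A; rewrite nest_coloured ?Aw ?a0_unused // sigma_colour.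
have [A wA Aa0] := a0_block_at wx0 wy0.
by exists w, A; rewrite (nest_a0 Aa0 wA) (negbTE wy0) Yw /= setUC.
Qed.

Lemma nest_onto u w : u != w ->
  exists p A, p \in blk A /\ [set p; nest A] = [set u; w].
Proof.
case: (eqVneq u y0) => [-> | uy0] uw; first by apply: nest_onto_y0; rewrite eq_sym.
case: (eqVneq w y0) uw => [-> | wy0] uw; first by rewrite setUC; apply: nest_onto_y0.
have cuw : pc u != pc w by apply: contra_neq uw; apply: point_colour_inj.
have [p [A [pA /eq_set2[[pu Aw] | [pw Au]]]]] := pair_bijective_onto cB cuw.
  exact: nest_onto_oriented pA pu Aw.
by rewrite setUC; apply: nest_onto_oriented wy0 uy0 pA pw Au; rewrite eq_sym.
Qed.

Lemma nest_pair_bijective : pair_bijective blk (nest_map nest).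
Proof.
apply: pair_bijective_of_onto => [| | u w uw]; last exact: nest_onto.
  by apply/nest_map_proper; exact: nest_notin.
by have [_ _ ->] := (pair_bijectiveP_card _ _).1 cB; rewrite card_ord.
Qed.

End Inverse.

Lemma unused_colour_nesting : exists phi, pair_bijective blk (nest_map phi).
Proof.
have le_card : #|'I_(#|T|)| <= #|T| by rewrite card_ord.
have [sigma recolourK sigmaK] := inj_card_bij recolour_inj le_card.
by exists (nest sigma); apply: nest_pair_bijective recolourK sigmaK.
Qed.

End UnusedColour.

Lemma repeated_colour_nesting : exists phi, pair_bijective blk (nest_map phi).
Proof.
have [a0 a0_unused] := unused_point_colour.
exact: unused_colour_nesting a0_unused.
Qed.

End RepeatedPointColour.

Lemma injective_colour_nesting (T B : finType) (blk : B -> {set T})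
    (c : T + B -> 'I_#|T|) :
  injective (fun p => c (inl p)) -> pair_bijective blk c ->
  exists phi, pair_bijective blk (nest_map phi).
Proof.
move=> pc_inj cB; have le_card : #|'I_(#|T|)| <= #|T| by rewrite card_ord.
have [sigma pcK sigmaK] := inj_card_bij pc_inj le_card.
have sigmaB : bijective sigma by exists (fun p => c (inl p)).
exists (fun A => sigma (c (inr A))).
by apply: eq_pair_bijective (pair_bijective_comp sigmaB cB) => -[p|A] /=; rewrite ?pcK.
Qed.

Lemma exact_colouring_nesting (T B : finType) (blk : B -> {set T}) v k lam
    (c : T + B -> 'I_#|T|) :
  is_bibd blk v k lam -> pair_bijective blk c ->
  exists phi, pair_bijective blk (nest_map phi).
Proof.
case=> _ _ blk_lam cB.
case: (boolP (injectiveb (fun p => c (inl p)))) => [/injectiveP | ].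
  by move/injective_colour_nesting; apply.
case/injectivePn=> x0 [y0 x0y0 cx0y0].
exact: repeated_colour_nesting blk_lam cB _ _ x0y0 cx0y0.
Qed.

Theorem theorem5p2 (T B : finType) (blk : B -> {set T}) (v k lam : nat) :
  is_bibd blk v k lam ->
  (has_perfect_nesting blk v k lam <-> (banff blk /\ has_exact_colouring blk)).
Proof.
move=> bib; split=> [[phi /(perfect_nestingP _ bib) phiB] | [_ [c]]].
  have /exact_colouringP ec : pair_bijective blk (enum_rank \o nest_map phi).
    by apply: pair_bijective_comp phiB; exact: enum_rank_bij.
  by split; [apply: exact_colouring_banff ec | exists (enum_rank \o nest_map phi)].
move/exact_colouringP=> cB; have [phi phiB] := exact_colouring_nesting bib cB.
by exists phi; apply/(perfect_nestingP _ bib).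
Qed.
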